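(* Let $\mathcal R$ and $\mathcal S$ be TRSs which are equivalent modulo $\mathcal B$ (i.e. $\leftrightarrow^*_{\mathcal R\cup\mathcal B}=\leftrightarrow^*_{\mathcal S\cup\mathcal B}$) and canonical modulo $\mathcal B$. If there is a $\mathcal B$-compatible reduction order $>$ with $\ell>r$ for all rules $\ell\to r\in\mathcal R\cup\mathcal S$, then every rule of $\mathcal R$ has a right-$\mathcal B$-equivalent variant in $\mathcal S$ and vice versa.
   Context: Terms over a signature $\mathcal F$; $\to_{\mathcal R}$ is the usual rewrite relation, $\leftarrow$ its inverse. $\mathcal B$ is a fixed ES with $\mathrm{Var}(\ell)=\mathrm{Var}(r)$ for all $\ell\approx r\in\mathcal B$, $\sim_{\mathcal B}=\leftrightarrow^*_{\mathcal B}$, $\to_{\mathcal R/\mathcal B}=\sim_{\mathcal B}\cdot\to_{\mathcal R}\cdot\sim_{\mathcal B}$. Terminating modulo $\mathcal B$: no infinite $\to_{\mathcal R/\mathcal B}$-sequence; Church–Rosser modulo $\mathcal B$: $\leftrightarrow^*_{\mathcal R\cup\mathcal B}\subseteq\to^*_{\mathcal R}\cdot\sim_{\mathcal B}\cdot\leftarrow^*_{\mathcal R}$; complete modulo $\mathcal B$: both. A TRS is left-reduced if for every rule $\ell\to r$, $\ell$ is a normal form of the TRS without that rule; right-$\mathcal B$-reduced if for every rule $\ell\to r$, $r$ is a normal form of $\to_{\mathcal R/\mathcal B}$; canonical modulo $\mathcal B$ if complete modulo $\mathcal B$, left-reduced and right-$\mathcal B$-reduced. A $\mathcal B$-compatible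 reduction order is a well-founded order on terms closed under contexts and substitutions with $\sim_{\mathcal B}\cdot>\cdot\sim_{\mathcal B}\subseteq>$. Two rules $\ell\to r,\ell'\to r'$ are right-$\mathcal B$-equivalent variants if there is a renaming $\sigma$ with $\ell\sigma=\ell'$ and $r\sigma\sim_{\mathcal B}r'$. *)

(* First-order terms over a signature F (function symbols of
   type F, unranked as in IsaFoR) with the countably infinite variable set nat. *)
From Stdlib Require Import List Relations.
Import ListNotations.

Set Implicit Arguments.

Section Terms.
Variable F : Type.

Inductive term : Type :=
| Var : nat -> term
| Fun : F -> list term -> term.

Fixpoint subst (sigma : nat -> term) (t : term) : term :=
  match t with
  | Var x => sigma x
  | Fun f ts => Fun f (map (subst sigma) ts)
  end.

Fixpoint vars (t : term) : list nat :=
  match t with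
  | Var x => [x]
  | Fun _ ts => flat_map vars ts
  end.

Inductive ctx : Type :=
| Hole : ctx
| CFun : F -> list term -> ctx -> list term -> ctx.

Fixpoint fill (C : ctx) (t : term) : term :=
  match C with
  | Hole => t
  | CFun f before C' after => Fun f (before ++ fill C' t :: after)
  end.

Definition rules := term -> term -> Prop.

Definition is_trs (R : rules) : Prop :=
  forall l r, R l r -> (forall x, l <> Var x) /\ incl (vars r) (vars l).

Definition var_preserving (B : rules) : Prop :=
  forall l r, B l r -> forall x, In x (vars l) <-> In x (vars r).

Definition rules_union (R S : rules) : rules := fun l r => R l r \/ S l r.

Definition rstep (R : rules) (s t : term) : Prop :=
  exists C l r sigma, R l r /\ s = fill C (subst sigma l) /\ t = fill C (subst sigma r).

Definition rconv (R : rules) : relation term := clos_refl_sym_trans term (rstep R).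

Definition simB (B : rules) : relation term := rconv B.

Definition rstep_mod (R B : rules) (s t : term) : Prop :=
  exists s' t', simB B s s' /\ rstep R s' t' /\ simB B t' t.

Definition normal_form (rel : relation term) (t : term) : Prop :=
  ~ exists u, rel t u.

Definition terminating_mod (R B : rules) : Prop :=
  ~ exists f : nat -> term, forall n, rstep_mod R B (f n) (f (S n)).

Definition church_rosser_mod (R B : rules) : Prop :=
  forall s t, rconv (rules_union R B) s t ->
    exists u v, clos_refl_trans term (rstep R) s u /\ simB B u v /\
                clos_refl_trans term (rstep R) t v.

Definition complete_mod (R B : rules) : Prop :=
  terminating_mod R B /\ church_rosser_mod R B.

Definition remove_rule (R : rules) (l r : term) : rules :=
  fun l' r' => R l' r' /\ (l', r') <> (l, r).

Definition left_reduced (R : rules) : Prop :=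
  forall l r, R l r -> normal_form (rstep (remove_rule R l r)) l.

Definition right_B_reduced (R B : rules) : Prop :=
  forall l r, R l r -> normal_form (rstep_mod R B) r.

Definition canonical_mod (R B : rules) : Prop :=
  complete_mod R B /\ left_reduced R /\ right_B_reduced R B.

Definition B_compatible_reduction_order (B : rules) (gt : relation term) : Prop :=
  (forall t, ~ gt t t) /\
  (forall s t u, gt s t -> gt t u -> gt s u) /\
  well_founded (fun x y => gt y x) /\
  (forall C s t, gt s t -> gt (fill C s) (fill C t)) /\
  (forall sigma s t, gt s t -> gt (subst sigma s) (subst sigma t)) /\
  (forall s s' t' t, simB B s s' -> gt s' t' -> simB B t' t -> gt s t).

Definition renaming (sigma : nat -> term) : Prop :=
  exists pi pi' : nat -> nat,
    (forall x, pi' (pi x) = x) /\ (forall x, pi (pi' x) = x) /\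
    (forall x, sigma x = Var (pi x)).

Definition right_B_equiv_variants (B : rules) (l r l' r' : term) : Prop :=
  exists sigma, renaming sigma /\ subst sigma l = l' /\ simB B (subst sigma r) r'.

End Terms.

Arguments rules_union {F} R S.
Arguments rconv {F} R.
Arguments simB {F} B.
Arguments rstep {F} R.
Arguments rstep_mod {F} R B.

(* The left-hand side [l] of a rule [l -> r] of R is S-reducible: otherwise [l] would be an
   S-normal form S∪B-convertible to [r], so Church-Rosser modulo B would give [l ~_B v <-*_S r],
   and [l > r >= v] contradicts the B-compatibility of [>].  Symmetrically the lhs [l'] of the
   S-rule reducing [l] is R-reducible, and left-reducedness of R forces that reduction to use
   [l -> r] itself; comparing sizes, [l] and [l'] are instances of each other, hence variants.
   Finally [r] and the corresponding instance of [r'] are convertible S-normal forms (R-normal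
   forms are S-normal forms, again by the order argument), so they are B-equivalent. *)
From Stdlib Require Import List Relations Lia Classical Arith.
Import ListNotations.

Set Implicit Arguments.

Definition swap (a b z : nat) : nat :=
  if Nat.eqb z a then b else if Nat.eqb z b then a else z.

Lemma swap_involutive a b z : swap a b (swap a b z) = z.
Proof.
  unfold swap.
  destruct (Nat.eqb_spec z a); destruct (Nat.eqb_spec z b); subst;
    repeat match goal with |- context [Nat.eqb ?x ?y] => destruct (Nat.eqb_spec x y) end; lia.
Qed.

Lemma injective_on_extends_to_bijection (D : list nat) (f : nat -> nat) :
  (forall x y, In x D -> In y D -> f x = f y -> x = y) ->
  exists p p' : nat -> nat,
    (forall x, p' (p x) = x) /\ (forall x, p (p' x) = x) /\ (forall x, In x D -> p x = f x).
Proof.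
  induction D as [|a D IH]; intros Hinj.
  - exists (fun x => x), (fun x => x). simpl; tauto.
  - destruct IH as (p & p' & Hp'p & Hpp' & Hpf).
    { intros; apply Hinj; simpl; auto. }
    destruct (in_dec Nat.eq_dec a D) as [Ha|Ha].
    + exists p, p'. repeat split; auto. intros x [<-|Hx]; auto.
    + (* correct [p] at [a] by post-composing with the transposition of [p a] and [f a] *)
      exists (fun z => swap (p a) (f a) (p z)), (fun z => p' (swap (p a) (f a) z)).
      repeat split.
      * intros x. rewrite swap_involutive. auto.
      * intros x. rewrite Hpp'. apply swap_involutive.
      * intros x [<-|Hx].
        -- unfold swap. rewrite Nat.eqb_refl. auto.
        -- rewrite (Hpf x Hx). unfold swap.
           destruct (Nat.eqb_spec (f x) (p a)) as [E|E].
           ++ rewrite <- Hpf in E by auto.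
              assert (x = a) by (rewrite <- (Hp'p x), <- (Hp'p a); congruence). subst; contradiction.
           ++ destruct (Nat.eqb_spec (f x) (f a)) as [E'|E']; auto.
              assert (x = a) by (apply Hinj; simpl; auto). subst; contradiction.
Qed.

Section Terms.
Variable F : Type.

Fixpoint term_nested_ind (P : term F -> Prop) (HVar : forall x, P (Var F x))
  (HFun : forall f ts, Forall P ts -> P (Fun f ts)) (t : term F) : P t :=
  match t with
  | Var _ x => HVar x
  | Fun f ts =>
      HFun f ts ((fix go ts := match ts return Forall P ts with
                               | [] => Forall_nil _
                               | t :: ts' => Forall_cons _ (term_nested_ind HVar HFun t) (go ts')
                               end) ts)
  end.

Fixpoint size (t : term F) : nat :=
  match t with Var _ _ => 1 | Fun _ ts => S (list_sum (map size ts)) end.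

Lemma size_pos (t : term F) : 1 <= size t.
Proof. destruct t; simpl; lia. Qed.

Lemma size_le_fill (C : ctx F) (t : term F) : size t <= size (fill C t).
Proof.
  induction C as [|f b C IH a]; simpl; auto.
  rewrite map_app, list_sum_app. simpl. lia.
Qed.

Lemma fill_size_le_Hole (C : ctx F) (t : term F) : size (fill C t) <= size t -> C = Hole F.
Proof.
  destruct C as [|f b C a]; simpl; auto.
  rewrite map_app, list_sum_app. simpl. pose proof (size_le_fill C t). lia.
Qed.

Lemma size_le_subst (sigma : nat -> term F) (t : term F) : size t <= size (subst sigma t).
Proof.
  induction t using term_nested_ind; simpl.
  - apply size_pos.
  - apply le_n_S. induction H; simpl; lia.
Qed.

Lemma mutual_fill_instances_Hole (C D : ctx F) (sigma tau : nat -> term F) (t u : term F) :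
  fill C (subst sigma u) = t -> fill D (subst tau t) = u -> C = Hole F /\ D = Hole F.
Proof.
  intros Et Eu.
  pose proof (size_le_fill C (subst sigma u)). pose proof (size_le_fill D (subst tau t)).
  pose proof (size_le_subst sigma u). pose proof (size_le_subst tau t).
  split; [apply (fill_size_le_Hole C (subst sigma u)) | apply (fill_size_le_Hole D (subst tau t))];
    rewrite ?Et, ?Eu in *; lia.
Qed.

Lemma subst_comp (sigma tau : nat -> term F) (t : term F) :
  subst tau (subst sigma t) = subst (fun x => subst tau (sigma x)) t.
Proof.
  induction t using term_nested_ind; simpl; auto.
  f_equal. rewrite map_map. apply map_ext_in. intros a Ha. rewrite Forall_forall in H. auto.
Qed.

Lemma subst_ext (t : term F) (rho rho' : nat -> term F) :
  (forall x, In x (vars t) -> rho x = rho' x) -> subst rho t = subst rho' t.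
Proof.
  revert rho rho'. induction t using term_nested_ind; simpl; intros rho rho' Hx; auto.
  f_equal. apply map_ext_in. intros a Ha. rewrite Forall_forall in H.
  apply H; auto. intros x Hin. apply Hx, in_flat_map. eauto.
Qed.

Lemma subst_Var (t : term F) : subst (Var F) t = t.
Proof.
  induction t using term_nested_ind; simpl; auto.
  f_equal. rewrite Forall_forall in H. rewrite <- map_id. apply map_ext_in. auto.
Qed.

Lemma subst_fixpoint_Var (rho : nat -> term F) (t : term F) :
  subst rho t = t -> forall x, In x (vars t) -> rho x = Var F x.
Proof.
  revert rho. induction t as [y|f ts IH] using term_nested_ind; simpl; intros rho E x Hx.
  - destruct Hx as [<-|[]]; auto.
  - injection E as E. apply in_flat_map in Hx as [u [Hu Hx]].
    rewrite Forall_forall in IH. apply (IH u Hu); auto.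
    clear IH Hx. induction ts as [|v ts IHts]; simpl in *; [contradiction|].
    injection E as Ev Ets. destruct Hu; subst; auto.
Qed.

Lemma subst_left_inverse_renaming (sigma tau : nat -> term F) (t : term F) :
  subst sigma (subst tau t) = t ->
  exists rho, renaming rho /\ forall x, In x (vars t) -> rho x = tau x.
Proof.
  rewrite subst_comp. intros Hfix.
  assert (Hid : forall x, In x (vars t) -> subst sigma (tau x) = Var F x)
    by exact (subst_fixpoint_Var _ Hfix).
  set (f := fun x => match tau x with Var _ y => y | _ => x end).
  assert (Hf : forall x, In x (vars t) -> tau x = Var F (f x)).
  { intros x Hx. specialize (Hid x Hx). unfold f.
    destruct (tau x); simpl in Hid; [reflexivity | discriminate]. }
  destruct (injective_on_extends_to_bijection (vars t) f) as (p & p' & Hp'p & Hpp' & Hpf).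
  { intros x y Hx Hy Exy. pose proof (Hid x Hx) as Ex. pose proof (Hid y Hy) as Ey.
    rewrite Hf in Ex, Ey by auto. simpl in Ex, Ey. rewrite Exy in Ex. congruence. }
  exists (fun x => Var F (p x)). split.
  - exists p, p'. auto.
  - intros x Hx. rewrite Hpf, Hf; auto.
Qed.

Fixpoint csubst (sigma : nat -> term F) (C : ctx F) : ctx F :=
  match C with
  | Hole _ => Hole F
  | CFun f b C' a => CFun f (map (subst sigma) b) (csubst sigma C') (map (subst sigma) a)
  end.

Lemma subst_fill (sigma : nat -> term F) (C : ctx F) (t : term F) :
  subst sigma (fill C t) = fill (csubst sigma C) (subst sigma t).
Proof. induction C; simpl; auto. rewrite map_app. simpl. rewrite IHC. auto. Qed.

Fixpoint ccomp (C1 C2 : ctx F) : ctx F :=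
  match C1 with
  | Hole _ => C2
  | CFun f b C a => CFun f b (ccomp C C2) a
  end.

Lemma fill_ccomp (C1 C2 : ctx F) (t : term F) : fill (ccomp C1 C2) t = fill C1 (fill C2 t).
Proof. induction C1; simpl; auto. rewrite IHC1. auto. Qed.

End Terms.

Section Rewriting.
Variable F : Type.
Implicit Types (R S B : rules F) (s t u v w : term F).

Lemma rstep_rule R l r : R l r -> rstep R l r.
Proof.
  intros HR. exists (Hole F), l, r, (Var F). simpl. rewrite !subst_Var. auto.
Qed.

Lemma rstep_subst R (sigma : nat -> term F) s t :
  rstep R s t -> rstep R (subst sigma s) (subst sigma t).
Proof.
  intros (C & l & r & rho & HR & -> & ->).
  exists (csubst sigma C), l, r, (fun x => subst sigma (rho x)).
  rewrite !subst_fill, !subst_comp. auto.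
Qed.

Lemma rconv_rstep_l R B s t : rstep R s t -> rconv (rules_union R B) s t.
Proof.
  intros (C & l & r & rho & HR & -> & ->). apply rst_step.
  exists C, l, r, rho. unfold rules_union. auto.
Qed.

Lemma simB_subst B (sigma : nat -> term F) s t :
  simB B s t -> simB B (subst sigma s) (subst sigma t).
Proof.
  induction 1.
  - apply rst_step, rstep_subst; auto.
  - apply rst_refl.
  - apply rst_sym; auto.
  - eapply rst_trans; eauto.
Qed.

Lemma normal_form_rt R t u :
  normal_form (rstep R) t -> clos_refl_trans (term F) (rstep R) t u -> u = t.
Proof.
  intros Hnf H. apply clos_rt_rt1n in H. destruct H; auto.
  exfalso; apply Hnf; eauto.
Qed.

Lemma normal_form_subst_inv R (tau : nat -> term F) u :
  normal_form (rstep R) (subst tau u) -> normal_form (rstep R) u.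
Proof. intros Hnf [w Hw]. apply Hnf. exists (subst tau w). apply rstep_subst; auto. Qed.

Lemma normal_form_rstep_mod R B t :
  normal_form (rstep_mod R B) t -> normal_form (rstep R) t.
Proof.
  intros Hnf [w Hw]. apply Hnf. exists w, t, w. repeat split; auto; apply rst_refl.
Qed.

Lemma church_rosser_mod_normal_form R B s t :
  church_rosser_mod R B -> rconv (rules_union R B) s t -> normal_form (rstep R) s ->
  exists v, simB B s v /\ clos_refl_trans (term F) (rstep R) t v.
Proof.
  intros HCR Hst Hnf. destruct (HCR _ _ Hst) as (u & v & Hsu & Huv & Htv).
  rewrite (normal_form_rt Hnf Hsu) in Huv. eauto.
Qed.

Lemma church_rosser_mod_normal_forms R B s t :
  church_rosser_mod R B -> rconv (rules_union R B) s t ->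
  normal_form (rstep R) s -> normal_form (rstep R) t -> simB B s t.
Proof.
  intros HCR Hst Hs Ht. destruct (church_rosser_mod_normal_form HCR Hst Hs) as (v & Hsv & Htv).
  rewrite (normal_form_rt Ht Htv) in Hsv. exact Hsv.
Qed.

Lemma left_reduced_instance R l r l' r' (C : ctx F) (sigma : nat -> term F) :
  left_reduced R -> R l r -> R l' r' -> l = fill C (subst sigma l') -> (l', r') = (l, r).
Proof.
  intros HLR Hlr Hlr' El. apply NNPP. intros Hne. apply (HLR l r Hlr).
  exists (fill C (subst sigma r')), C, l', r', sigma. unfold remove_rule. auto.
Qed.

End Rewriting.

Section ReductionOrder.
Variables (F : Type) (B : rules F) (gt : relation (term F)).
Hypothesis Hgt : B_compatible_reduction_order B gt.
Implicit Types (R S : rules F) (s t v w : term F).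

Definition orients R : Prop := forall l r, R l r -> gt l r.

Lemma orients_rstep R s t : orients R -> rstep R s t -> gt s t.
Proof.
  destruct Hgt as (_ & _ & _ & Hctx & Hsubst & _).
  intros HR (C & l & r & rho & Hlr & -> & ->). auto.
Qed.

Lemma orients_rt R s t :
  orients R -> clos_refl_trans (term F) (rstep R) s t -> s = t \/ gt s t.
Proof.
  destruct Hgt as (_ & Htrans & _).
  intros HR Hst. induction Hst as [s t Hst| |s u t _ IH1 _ IH2].
  - right. apply (orients_rstep HR Hst).
  - auto.
  - destruct IH1 as [->|]; destruct IH2 as [->|]; eauto.
Qed.

Lemma not_simB_below R s t v :
  orients R -> gt s t -> clos_refl_trans (term F) (rstep R) t v -> ~ simB B s v.
Proof.
  destruct Hgt as (Hirr & Htrans & _ & _ & _ & Hcompat).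
  intros HR Hst Htv Hsv. apply (Hirr s).
  apply (Hcompat s s v s); [apply rst_refl | | apply rst_sym; exact Hsv].
  destruct (orients_rt HR Htv) as [<-|Htv']; eauto.
Qed.

Section Equivalent.
Variables R S : rules F.
Hypothesis HRS : forall s t, rconv (rules_union R B) s t -> rconv (rules_union S B) s t.
Hypothesis HCR_S : church_rosser_mod S B.
Hypothesis HS : orients S.

Lemma normal_form_transfer t :
  orients R -> normal_form (rstep S) t -> normal_form (rstep R) t.
Proof.
  intros HR Hnf [w Htw].
  destruct (church_rosser_mod_normal_form HCR_S (HRS (rconv_rstep_l B Htw)) Hnf)
    as (v & Htv & Hwv).
  exact (not_simB_below HS (orients_rstep HR Htw) Hwv Htv).
Qed.

Lemma orients_lhs_reducible l r : R l r -> gt l r -> exists w, rstep S l w.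
Proof.
  intros Hlr Hgtlr. apply NNPP. intros Hnf.
  destruct (church_rosser_mod_normal_form HCR_S (HRS (rconv_rstep_l B (rstep_rule R l r Hlr))) Hnf)
    as (v & Hlv & Hrv).
  exact (not_simB_below HS Hgtlr Hrv Hlv).
Qed.

End Equivalent.

Section EquivalentCanonical.
Variables R S : rules F.
Hypothesis HRS : forall s t, rconv (rules_union R B) s t -> rconv (rules_union S B) s t.
Hypothesis HSR : forall s t, rconv (rules_union S B) s t -> rconv (rules_union R B) s t.
Hypotheses (HtrsR : is_trs R) (HtrsS : is_trs S).
Hypotheses (HcanR : canonical_mod R B) (HcanS : canonical_mod S B).
Hypotheses (HR : orients R) (HS : orients S).

Lemma lhs_mutual_instances l r :
  R l r -> exists l' r' (sigma tau : nat -> term F),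
    S l' r' /\ subst sigma l' = l /\ subst tau l = l'.
Proof.
  destruct HcanR as [[_ HCR_R] [HLR_R _]]. destruct HcanS as [[_ HCR_S] _].
  intros Hlr.
  destruct (orients_lhs_reducible HRS HCR_S HS Hlr (HR Hlr))
    as [w (C & l' & r' & sigma & Hlr' & El & _)].
  destruct (orients_lhs_reducible HSR HCR_R HR Hlr' (HS Hlr'))
    as [w' (D & l'' & r'' & tau & Hlr'' & El' & _)].
  assert (Hself : (l'', r'') = (l, r)).
  { apply (left_reduced_instance r l'' r'' (ccomp C (csubst sigma D))
             (fun x => subst sigma (tau x)) HLR_R Hlr Hlr'').
    rewrite El, El', subst_fill, fill_ccomp, subst_comp. reflexivity. }
  injection Hself as -> ->.
  destruct (mutual_fill_instances_Hole C D sigma tau (eq_sym El) (eq_sym El')) as [-> ->].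
  exists l', r', sigma, tau. simpl in *. auto.
Qed.

Lemma rhs_simB_of_mutual_instances l r l' r' (sigma tau : nat -> term F) :
  R l r -> S l' r' -> subst sigma l' = l -> subst tau l = l' -> simB B (subst tau r) r'.
Proof.
  destruct HcanR as [[_ HCR_R] [_ HRR_R]]. destruct HcanS as [[_ HCR_S] [_ HRR_S]].
  intros Hlr Hlr' El El'.
  assert (Hback : subst tau (subst sigma r') = r').
  { assert (Hid : forall x, In x (vars l') -> subst tau (sigma x) = Var F x).
    { apply (subst_fixpoint_Var (fun x => subst tau (sigma x))).
      rewrite <- subst_comp, El, El'. reflexivity. }
    rewrite subst_comp. rewrite <- (subst_Var r') at 2. apply subst_ext.
    intros x Hx. apply Hid, (proj2 (HtrsS Hlr')), Hx. }
  assert (Hnf_r : normal_form (rstep S) r)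
    by exact (normal_form_transfer HSR HCR_R HR HS (normal_form_rstep_mod (HRR_R _ _ Hlr))).
  assert (Hnf_r' : normal_form (rstep S) (subst sigma r')).
  { apply (normal_form_subst_inv tau). rewrite Hback.
    exact (normal_form_rstep_mod (HRR_S _ _ Hlr')). }
  assert (Hconv : rconv (rules_union S B) r (subst sigma r')).
  { eapply rst_trans.
    - apply rst_sym, HRS, rconv_rstep_l, rstep_rule, Hlr.
    - rewrite <- El. apply rconv_rstep_l, rstep_subst, rstep_rule, Hlr'. }
  rewrite <- Hback. apply simB_subst.
  exact (church_rosser_mod_normal_forms HCR_S Hconv Hnf_r Hnf_r').
Qed.

Lemma rule_has_right_B_equiv_variant l r :
  R l r -> exists l' r', S l' r' /\ right_B_equiv_variants B l r l' r'.
Proof.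
  intros Hlr.
  destruct (lhs_mutual_instances Hlr) as (l' & r' & sigma & tau & Hlr' & El & El').
  destruct (@subst_left_inverse_renaming _ sigma tau l) as (rho & Hrho & Hrho_tau).
  { rewrite El', El. reflexivity. }
  exists l', r'. split; auto. exists rho. repeat split; auto.
  - rewrite <- El'. apply subst_ext. auto.
  - rewrite (subst_ext r rho tau).
    + exact (rhs_simB_of_mutual_instances sigma tau Hlr Hlr' El El').
    + intros x Hx. apply Hrho_tau, (proj2 (HtrsR Hlr)), Hx.
Qed.

End EquivalentCanonical.
End ReductionOrder.

Theorem theorem6p18 (F : Type) (B R S : rules F) (gt : relation (term F)) :
  var_preserving B ->
  is_trs R -> is_trs S ->
  (forall s t, rconv (rules_union R B) s t <-> rconv (rules_union S B) s t) ->
  canonical_mod R B -> canonical_mod S B ->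
  B_compatible_reduction_order B gt ->
  (forall l r, rules_union R S l r -> gt l r) ->
  (forall l r, R l r -> exists l' r', S l' r' /\ right_B_equiv_variants B l r l' r') /\
  (forall l r, S l r -> exists l' r', R l' r' /\ right_B_equiv_variants B l r l' r').
Proof.
  intros _ HtrsR HtrsS Heq HcanR HcanS Hgt Horient.
  assert (HR : orients gt R) by (intros l r Hlr; apply Horient; left; exact Hlr).
  assert (HS : orients gt S) by (intros l r Hlr; apply Horient; right; exact Hlr).
  split; intros l r.
  - apply (rule_has_right_B_equiv_variant Hgt); auto; intros s t; apply Heq.
  - apply (rule_has_right_B_equiv_variant Hgt); auto; intros s t; apply Heq.
Qed.
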